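(* Every kite-free chordal graph is hereditarily connected-domishold.
   Context: The kite (co-fork) is the $5$-vertex graph obtained from a diamond ($K_4$ minus an edge) by adding a new vertex adjacent to exactly one of the two degree-$2$ vertices of the diamond. A graph is chordal if it has no induced cycle of length at least $4$. A connected dominating set of a connected graph $G$ is a set $S\subseteq V(G)$ such that every vertex outside $S$ has a neighbor in $S$ and $G[S]$ is connected; $G$ is connected-domishold if there exist $w:V(G)\to\mathbb{R}_{\ge0}$, $t\in\mathbb{R}_{\ge0}$ such that for all $S\subseteq V(G)$, $\sum_{x\in S}w(x)\ge t$ iff $S$ is a connected dominating set, disconnected graphs being connected-domishold by convention. $G$ is hereditarily connected-domishold if every induced subgraph of $G$ is connected-domishold. *)

From mathcomp Require Import all_boot.
From Stdlib Require Import Reals.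
Set Implicit Arguments. Unset Strict Implicit. Unset Printing Implicit Defensive.

Definition simple_graph (T : finType) (e : rel T) : Prop :=
  symmetric e /\ irreflexive e.

Definition induced_rel (T : finType) (e : rel T) (A : {set T}) : rel T :=
  fun x y => [&& x \in A, y \in A & e x y].

(* G[A] is connected: nonempty and any two vertices joined by a path in G[A].
   (The null graph is regarded as not connected.) *)
Definition connected_in (T : finType) (e : rel T) (A : {set T}) : Prop :=
  A != set0 /\ forall x y, x \in A -> y \in A -> connect (induced_rel e A) x y.

Definition is_cds (T : finType) (e : rel T) (A S : {set T}) : Prop :=
  S \subset A /\
  (forall x, x \in A -> x \notin S -> exists2 y, y \in S & e x y) /\
  connected_in e S.

(* G[A] is connected-domishold (disconnected graphs are by convention). *)
Definition connected_domishold (T : finType) (e : rel T) (A : {set T}) : Prop :=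
  ~ connected_in e A \/
  exists (w : T -> R) (t : R),
    (forall x, x \in A -> Rle 0 (w x)) /\ Rle 0 t /\
    forall S : {set T}, S \subset A ->
      (Rle t (\big[Rplus/0%R]_(x in S) w x) <-> is_cds e A S).

Definition hereditarily_connected_domishold (T : finType) (e : rel T) : Prop :=
  forall A : {set T}, connected_domishold e A.

Definition induced_copy (n : nat) (h : rel 'I_n) (T : finType) (e : rel T)
  (f : 'I_n -> T) : Prop :=
  injective f /\ forall i j : 'I_n, i != j -> e (f i) (f j) = h i j.

(* Kite: diamond on 0,1,2,3 with 1,2 the degree-3 vertices and 0,3 the
   degree-2 vertices; vertex 4 adjacent only to 0. *)
Definition kite_edge (i j : nat) : bool :=
  [|| (i == 0) && (j == 1), (i == 0) && (j == 2), (i == 1) && (j == 2),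
      (i == 1) && (j == 3), (i == 2) && (j == 3) | (i == 0) && (j == 4)].
Definition kite_rel : rel 'I_5 :=
  fun i j => kite_edge i j || kite_edge j i.

Definition kite_free (T : finType) (e : rel T) : Prop :=
  forall f : 'I_5 -> T, ~ induced_copy kite_rel e f.

Definition cycle_rel (k : nat) : rel 'I_k :=
  fun i j => (j == i.+1 %% k :> nat) || (i == j.+1 %% k :> nat).

Definition chordal (T : finType) (e : rel T) : Prop :=
  forall k : nat, 4 <= k -> forall f : 'I_k -> T, ~ induced_copy (@cycle_rel k) e f.

From Stdlib Require Import Reals Classical.
From mathcomp Require Import all_boot zify.
Set Implicit Arguments. Unset Strict Implicit. Unset Printing Implicit Defensive.

(** Given A, weight each vertex by the number of minimal cutsets of G[A] containing it
    and take the number of minimal cutsets as threshold; here a cutset is a set X of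
    vertices of A such that G[A \ X] is not connected.  A set S of vertices of A is a
    connected dominating set of G[A] exactly when it meets every minimal cutset.  In a
    kite-free chordal graph any two minimal cutsets X, Y satisfy |X \ Y| <= 1: minimal
    cutsets of chordal graphs are cliques, and kite-freeness forces every vertex outside
    a minimal cutset X to see one of any two vertices of X.  So a set missing some
    minimal cutset X gets at most |Y \ X| <= 1 from every other minimal cutset Y and
    stays below the threshold, while a set meeting all of them reaches it.  This also
    covers a disconnected G[A], where the empty set is the unique minimal cutset. *)

Section Graph.

Variables (T : finType) (e : rel T).
Hypothesis e_sym : symmetric e.

Lemma induced_rel_sym (B : {set T}) : symmetric (induced_rel e B).
Proof. by move=> x y; rewrite /induced_rel e_sym andbCA. Qed.

Lemma connect_induced_sym (B : {set T}) x y :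
  connect (induced_rel e B) x y = connect (induced_rel e B) y x.
Proof. exact/sym_connect_sym/induced_rel_sym. Qed.

Lemma connect_induced_sub (B B' : {set T}) x y : B \subset B' ->
  connect (induced_rel e B) x y -> connect (induced_rel e B') x y.
Proof.
move=> sBB'; apply: connect_sub => a b /and3P [aB bB eab]; apply: connect1.
by rewrite /induced_rel (subsetP sBB' _ aB) (subsetP sBB' _ bB) eab.
Qed.

Lemma connect_induced_exit (B B' : {set T}) u v :
  connect (induced_rel e B') u v -> u \in B -> v \notin B ->
  exists z w, [/\ z \in B, connect (induced_rel e B) u z, w \in B', w \notin B & e z w].
Proof.
move/connectP=> [p + ->]; elim: p u => [|y p IHp] u /=; first by move=> _ ->.
case/andP=> /and3P [_ yB' euy] yp uB vB; case yB: (y \in B); last first.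
  by exists u, y; rewrite yB connect0.
have [z [w [zB yz wB' wB ezw]]] := IHp y yp yB vB.
exists z, w; split=> //; apply: connect_trans yz.
by apply: connect1; rewrite /induced_rel uB yB euy.
Qed.

Definition connectedb (B : {set T}) :=
  (B != set0) && [forall x in B, forall y in B, connect (induced_rel e B) x y].

Lemma connectedP (B : {set T}) : reflect (connected_in e B) (connectedb B).
Proof.
apply: (iffP andP) => [[B0 /forall_inP BC]|[B0 BC]]; split=> //.
  by move=> x y xB yB; move/forall_inP: (BC x xB); apply.
by apply/forall_inP => x xB; apply/forall_inP => y yB; apply: BC.
Qed.

Lemma not_connectedP (B : {set T}) r : ~~ connectedb B -> r \in B ->
  exists2 u, u \in B & ~~ connect (induced_rel e B) r u.
Proof.
move=> BnC rB; apply: NNPP => noU; case/negP: BnC; apply/connectedP; split.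
  by apply/set0Pn; exists r.
have rC u : u \in B -> connect (induced_rel e B) r u.
  by move=> uB; apply: NNPP => ru; apply: noU; exists u => //; apply/negP.
by move=> x y xB yB; rewrite (connect_trans _ (rC y yB)) // connect_induced_sym rC.
Qed.

Definition component (B : {set T}) r := [set z in B | connect (induced_rel e B) r z].

Lemma component_sub (B : {set T}) r : component B r \subset B.
Proof. by apply/subsetP => z; rewrite inE => /andP []. Qed.

Lemma component_id (B : {set T}) r : r \in B -> r \in component B r.
Proof. by move=> rB; rewrite inE rB connect0. Qed.

Lemma component_setD_notin (A X : {set T}) u x : x \in X -> x \notin component (A :\: X) u.
Proof.
by move=> xX; apply: contraL xX => /(subsetP (component_sub _ _)); rewrite inE => /andP [].
Qed.

Lemma component_closed (B : {set T}) r z y :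
  z \in component B r -> y \in B -> e z y -> y \in component B r.
Proof.
rewrite !inE => /andP [zB rz] yB ezy; rewrite yB (connect_trans rz) //.
by apply: connect1; rewrite /induced_rel zB yB ezy.
Qed.

Lemma component_disjoint (B : {set T}) r u z :
  ~~ connect (induced_rel e B) r u -> z \in component B r -> z \notin component B u.
Proof.
move=> ru; rewrite !inE => /andP [_ rz]; apply: contraNN ru => /andP [_ uz].
by rewrite (connect_trans rz) // connect_induced_sym.
Qed.

Lemma component_separated (B : {set T}) r u z y :
  ~~ connect (induced_rel e B) r u -> z \in component B r -> y \in component B u ->
  (z != y) && ~~ e z y.
Proof.
rewrite connect_induced_sym => ur zC yC; have yCr := component_disjoint ur yC.
rewrite (contraNneq _ yCr) => [|<- //]; apply: contraNN yCr => /(component_closed zC).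
by apply; apply: subsetP (component_sub _ _) _ yC.
Qed.

Lemma connect_component (B : {set T}) r z1 z2 :
  z1 \in component B r -> z2 \in component B r ->
  connect (induced_rel e (component B r)) z1 z2.
Proof.
move=> z1C; rewrite inE => /andP [_ rz2].
have: connect (induced_rel e B) z1 z2.
  by move: z1C; rewrite inE connect_induced_sym => /andP [_ /connect_trans]; apply.
move/connectP=> [p + ->]; elim: p z1 z1C => [|y p IHp] z1 z1C /=.
  by move=> _; apply: connect0.
case/andP=> /and3P [_ yB ez1y] yp; have yC := component_closed z1C yB ez1y.
by apply: connect_trans (IHp y yC yp); apply: connect1; rewrite /induced_rel z1C yC.
Qed.

Definition induced_path (g : nat -> T) (k : nat) :=
  (forall i j, i <= k -> j <= k -> g i = g j -> i = j) /\
  (forall i j, i < j -> j <= k -> e (g i) (g j) = (j == i.+1)).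

Definition walk_in (C P Q : {set T}) (g : nat -> T) (k : nat) :=
  [/\ g 0 \in P, g k \in Q, forall i, i <= k -> g i \in C
    & forall i, i < k -> e (g i) (g i.+1)].

Section Walks.

Variables C P Q : {set T}.

Lemma walk_of_connect x y : x \in P -> y \in Q -> x \in C ->
  connect (induced_rel e C) x y -> exists g k, walk_in C P Q g k.
Proof.
move=> xP yQ xC /connectP [p xp yl].
exists (fun i => nth x (x :: p) i), (size p); split=> //=.
- by rewrite -last_nth -yl.
- by case=> [|i] ip //=; move/pathP: xp => /(_ x i ip) /and3P [].
- by move=> i ip; move/pathP: xp => /(_ x i ip) /and3P [].
Qed.

Lemma exists_shortest_walk g k : walk_in C P Q g k ->
  exists g' k', walk_in C P Q g' k' /\
    forall g'' k'', walk_in C P Q g'' k'' -> k' <= k''.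
Proof.
elim/ltn_ind: k g => k IHk g gk.
case: (classic (exists g' k', walk_in C P Q g' k' /\ k' < k)).
  by move=> [g' [k' [g'k' k'k]]]; apply: IHk g'k'.
move=> noShorter; exists g, k; split=> // g'' k'' g''k''.
by rewrite leqNgt; apply/negP => k''k; apply: noShorter; exists g'', k''.
Qed.

Lemma walk_prefix g k i : walk_in C P Q g k -> i <= k -> g i \in Q ->
  walk_in C P Q g i.
Proof. by move=> [g0 _ gC ge] ik giQ; split=> // m mi; [apply: gC | apply: ge]; lia. Qed.

Lemma walk_suffix g k i : walk_in C P Q g k -> i <= k -> g i \in P ->
  walk_in C P Q (fun m => g (i + m)) (k - i).
Proof.
move=> [_ gk gC ge] ik giP; split=> [|||m mk]; rewrite ?addn0 ?subnKC //.
- by move=> m mk; apply: gC; lia.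
- by rewrite addnS; apply: ge; lia.
Qed.

Lemma walk_splice g k i j : walk_in C P Q g k -> i < j <= k -> e (g i) (g j) ->
  walk_in C P Q (fun m => if m <= i then g m else g (m + (j - i.+1))) (k - (j - i.+1)).
Proof.
move=> [g0 gk gC ge] /andP [ij jk] eij; split=> [|||m mk].
- by rewrite leq0n.
- by rewrite leqNgt (_ : i < k - _) ?subnK //; lia.
- by move=> m mk; case: ifP => _; apply: gC; lia.
case: (ltngtP m i) => [mi|im|->]; rewrite ?leqnn.
- by apply: ge; lia.
- by rewrite addSn; apply: ge; lia.
- by rewrite subnKC.
Qed.

Lemma shortest_walk_induced g k : walk_in C P Q g k ->
  (forall g' k', walk_in C P Q g' k' -> k <= k') ->
  [/\ induced_path g k, forall i, 0 < i <= k -> g i \notin P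
    & forall i, i < k -> g i \notin Q].
Proof.
move=> gk gmin; have [g0 gkQ gC ge] := gk.
have notP i : 0 < i <= k -> g i \notin P.
  by case/andP=> i0 ik; apply/negP => /(walk_suffix gk ik)/gmin; lia.
have notQ i : i < k -> g i \notin Q.
  by move=> ik; apply/negP => /(walk_prefix gk (ltnW ik))/gmin; lia.
have noChord i j : i.+1 < j <= k -> ~~ e (g i) (g j).
  case/andP=> ij jk; apply/negP => /(walk_splice gk).
  by rewrite (ltn_trans _ ij) ?jk // => /(_ isT)/gmin; lia.
split=> //; split=> [i j ik jk gij|i j ij jk].
  wlog lt_ij : i j ik jk gij / i < j.
    move=> wl; case: (ltngtP i j) => [ij|ji|//]; first exact: wl.
    by apply/esym/wl.
  have [jk'|kj|je] := ltngtP j k; last 2 first.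
  - lia.
  - by have := notQ i; rewrite gij je gkQ -je lt_ij => /(_ isT).
  - have /(walk_splice gk) : i < j.+1 <= k by rewrite jk' ltnW.
    by rewrite gij ge // => /(_ isT)/gmin; lia.
case: eqP => [->|ne]; first by apply: ge; lia.
by apply/negbTE/noChord; rewrite jk andbT; lia.
Qed.

End Walks.

Lemma shortest_induced_path (C P Q : {set T}) x y :
  x \in P -> y \in Q -> x \in C -> connect (induced_rel e C) x y ->
  exists g k, [/\ walk_in C P Q g k, induced_path g k,
    forall i, 0 < i <= k -> g i \notin P & forall i, i < k -> g i \notin Q].
Proof.
move=> xP yQ xC /(walk_of_connect xP yQ xC) [g0 [k0 /exists_shortest_walk]].
move=> [g [k [gk gmin]]]; exists g, k.
by have [? ? ?] := shortest_walk_induced gk gmin; split.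
Qed.

Definition linking_path (C : {set T}) a b g k :=
  [/\ induced_path g k, forall i, i <= k -> g i \in C,
    forall i, i <= k -> e (g i) a = (i == 0) & forall i, i <= k -> e (g i) b = (i == k)].

Lemma exists_linking_path (C : {set T}) a b z1 z2 :
  z1 \in C -> z2 \in C -> connect (induced_rel e C) z1 z2 -> e z1 a -> e z2 b ->
  exists g k, linking_path C a b g k.
Proof.
move=> z1C z2C z12 ez1a ez2b.
have z1P : z1 \in [set z in C | e z a] by rewrite inE z1C.
have z2Q : z2 \in [set z in C | e z b] by rewrite inE z2C.
have [g [k [[+ + gC _] gpath notP notQ]]] := shortest_induced_path z1P z2Q z1C z12.
rewrite !inE => /andP [_ eg0a] /andP [_ egkb].
exists g, k; split=> // i ik.
  case: eqP => [->//|/eqP i0]; apply/negbTE.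
  by move: (notP i); rewrite inE gC // lt0n i0 ik; apply.
case: eqP => [->//|/eqP ik']; apply/negbTE.
by move: (notQ i); rewrite inE gC // ltn_neqAle ik' ik; apply.
Qed.

Definition path_cat (g1 : nat -> T) k1 (g2 : nat -> T) :=
  fun m => if m <= k1 then g1 m else g2 (m - k1.+1).

Lemma path_cat0 g1 k1 g2 : path_cat g1 k1 g2 0 = g1 0.
Proof. by []. Qed.

Lemma path_cat_last g1 k1 g2 k2 : path_cat g1 k1 g2 (k1 + k2).+1 = g2 k2.
Proof. by rewrite /path_cat ltnNge leq_addr /= subSS addKn. Qed.

Lemma induced_path1 v : induced_path (fun=> v) 0.
Proof. by split=> i j; lia. Qed.

Lemma induced_path_cat g1 k1 g2 k2 :
  induced_path g1 k1 -> induced_path g2 k2 ->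
  (forall i j, i <= k1 -> j <= k2 -> g1 i <> g2 j) ->
  (forall i j, i <= k1 -> j <= k2 -> e (g1 i) (g2 j) = (i == k1) && (j == 0)) ->
  induced_path (path_cat g1 k1 g2) (k1 + k2).+1.
Proof.
rewrite /path_cat => -[inj1 adj1] [inj2 adj2] g12 e12; split=> i j.
  move=> ik jk; case: ifP => ik1; case: ifP => jk1.
  - exact: inj1.
  - by move/g12; lia.
  - by move/esym/g12; lia.
  - by move/inj2; lia.
move=> ij jk; case: ifP => ik1; case: ifP => jk1.
- exact: adj1.
- by rewrite e12; lia.
- lia.
- by rewrite adj2; lia.
Qed.

Lemma induced_path_snoc g k b : induced_path g k ->
  (forall i, i <= k -> g i != b) -> (forall i, i <= k -> e (g i) b = (i == k)) ->
  induced_path (path_cat g k (fun=> b)) k.+1.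
Proof.
move=> gpath gb egb; rewrite -[k.+1]addn0.
apply: induced_path_cat gpath (induced_path1 b) _ _ => i j ik j0.
  exact/eqP/gb.
by rewrite leqn0 in j0; rewrite egb // (eqP j0) andbT.
Qed.

(* As [connected_in] fails on the empty set, [A] itself is a cutset of [A]. *)
Definition cutset (A X : {set T}) := (X \subset A) && ~~ connectedb (A :\: X).

Definition min_cutset (A X : {set T}) :=
  cutset A X && [forall Y : {set T}, (Y \proper X) ==> ~~ cutset A Y].

Lemma exists_min_cutset (A Y : {set T}) : cutset A Y ->
  exists2 X : {set T}, X \subset Y & min_cutset A X.
Proof.
have [n] := ubnP #|Y|; elim: n Y => // n IHn Y /ltnSE Yn cutY.
have [minY|] := boolP (min_cutset A Y); first by exists Y.
rewrite /min_cutset cutY negb_forall => /existsP [Z].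
rewrite negb_imply negbK => /andP [ZY cutZ].
have [X XZ minX] := IHn Z (leq_trans (proper_card ZY) Yn) cutZ.
by exists X => //; apply: subset_trans XZ (proper_sub ZY).
Qed.

Section MinimalCutset.

Variables A X : {set T}.
Hypothesis minX : min_cutset A X.

Lemma min_cutset_sub : X \subset A.
Proof. by case/andP: minX => /andP []. Qed.

Lemma min_cutset_minimal (Y : {set T}) : Y \proper X -> ~~ cutset A Y.
Proof. by case/andP: minX => _ /forall_inP; apply. Qed.

Lemma min_cutset_split r : r \in A :\: X ->
  exists2 u, u \in A :\: X & ~~ connect (induced_rel e (A :\: X)) r u.
Proof. by apply: not_connectedP; case/andP: minX => /andP []. Qed.

Lemma min_cutset_full x u : x \in X -> u \in A :\: X ->
  exists2 z, z \in component (A :\: X) u & e z x.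
Proof.
move=> xX uB; have := min_cutset_minimal (properD1 xX).
rewrite /cutset (subset_trans (subD1set X x) min_cutset_sub) /= negbK.
case/andP=> _ /forall_inP connX.
have xA : x \in A by apply: (subsetP min_cutset_sub).
have uB' : u \in A :\: (X :\ x).
  by move: uB; rewrite !inE => /andP [/negbTE -> ->]; rewrite andbF.
have xB' : x \in A :\: (X :\ x) by rewrite !inE eqxx xA.
have xB : x \notin A :\: X by rewrite !inE xX.
move/forall_inP: (connX u uB') => /(_ x xB') /connect_induced_exit /(_ uB xB).
case=> z [w [zB uz + wB ezw]]; rewrite !inE => /andP [wx wA].
have wX : w \in X by move: wB; rewrite !inE wA andbT negbK.
have /eqP <- : w == x by move: wx; rewrite wX andbT negbK.
by exists z; rewrite // inE zB.
Qed.

End MinimalCutset.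

Lemma connected_dominated (B S : {set T}) : S \subset B -> connected_in e S ->
  (forall x, x \in B -> x \notin S -> exists2 y, y \in S & e x y) -> connected_in e B.
Proof.
move=> SB [S0 connS] domS; split; first by apply: contraNneq S0 => B0; rewrite -subset0 -B0.
have toS x : x \in B -> exists2 s, s \in S & connect (induced_rel e B) x s.
  move=> xB; have [xS|xS] := boolP (x \in S); first by exists x.
  have [s sS exs] := domS x xB xS; exists s => //.
  by apply: connect1; rewrite /induced_rel xB (subsetP SB).
move=> x y xB yB; have [s sS xs] := toS x xB; have [t tS yt] := toS y yB.
rewrite (connect_trans xs) // (connect_trans (connect_induced_sub SB (connS s t sS tS))) //.
by rewrite connect_induced_sym.
Qed.

Lemma cds_meets_min_cutset (A S X : {set T}) : is_cds e A S -> min_cutset A X -> X :&: S != set0.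
Proof.
move=> [SA [domS connS]] minX; rewrite setI_eq0; apply/negP => dXS.
have SB : S \subset A :\: X.
  by apply/subsetP => s sS; rewrite inE (subsetP SA _ sS) (disjointFl dXS sS).
case/andP: minX => /andP [_ /connectedP []]; apply: connected_dominated SB connS _.
by move=> x /setDP [xA _]; apply: domS.
Qed.

Lemma meets_min_cutsets_cds (A S : {set T}) : S \subset A ->
  (forall X, min_cutset A X -> X :&: S != set0) -> is_cds e A S.
Proof.
move=> SA meetS.
have connD (Y : {set T}) : Y \subset A -> Y :&: S = set0 -> connected_in e (A :\: Y).
  move=> YA YS0; apply/connectedP/negPn/negP => nconn.
  have cutY : cutset A Y by rewrite /cutset YA.
  have [X XY minX] := exists_min_cutset cutY.
  by move: (meetS X minX); rewrite -subset0 -YS0 setSI.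
have DS0 : (A :\: S) :&: S = set0 by rewrite setDE -setIA [~: S :&: S]setIC setICr setI0.
have connS : connected_in e S.
  by have := connD _ (subsetDl A S) DS0; rewrite setDDr setDv set0U (setIidPr SA).
split=> //; split=> // x xA xS.
have YS0 : ((A :\: S) :\ x) :&: S = set0.
  by apply/eqP; rewrite -subset0 -DS0 setSI // subD1set.
have [_ connY] := connD _ (subset_trans (subD1set _ x) (subsetDl A S)) YS0.
have [S0 _] := connS; case/set0Pn: S0 => s sS.
have xY : x \in A :\: ((A :\: S) :\ x) by rewrite !inE eqxx xA.
have sY : s \in A :\: ((A :\: S) :\ x) by rewrite !inE sS (subsetP SA) ?andbF.
have sx : s \notin [set x] by rewrite inE; apply: contraNneq xS => <-.
move: (connY x s xY sY) => /connect_induced_exit /(_ (set11 x) sx).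
case=> z [w [/set1P -> _ + wx exw]]; rewrite !inE in wx * => /andP [+ wA].
by rewrite wx wA andbT negbK => wS; exists w.
Qed.

Section Chordal.

Hypotheses (e_irr : irreflexive e) (e_chordal : chordal e).

Lemma edge_neq x y : e x y -> x != y.
Proof. by apply: contraTneq => ->; rewrite e_irr. Qed.

Lemma chordal_no_hole g k v : induced_path g k -> 2 <= k ->
  (forall i, i <= k -> v != g i) -> e v (g 0) -> e v (g k) ->
  (forall i, 0 < i < k -> ~~ e v (g i)) -> False.
Proof.
move=> [ginj gadj] k2 vg v0 vk vmid.
have vadj i : i <= k -> e v (g i) = (i == 0) || (i == k).
  move=> ik; case: eqP => [->|i0] //; case: eqP => [->|ik'] //.
  by apply/negbTE/vmid; lia.
(* The cycle v, g 0, ..., g k. *)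
pose f (i : 'I_k.+2) := if val i == 0 then v else g (val i).-1.
apply: (e_chordal (_ : 4 <= k.+2) (f := f)); first lia; split.
  move=> [i Hi] [j Hj]; rewrite /f /= => fij; apply: val_inj => /=.
  move: fij; case: eqP => i0; case: eqP => j0; try lia.
  - by move=> vg'; move: (vg j.-1); rewrite vg' eqxx; lia.
  - by move=> gv; move: (vg i.-1); rewrite gv eqxx; lia.
  - by move/ginj; lia.
have cycle_mod i : i < k.+2 -> i.+1 %% k.+2 = if i.+1 == k.+2 then 0 else i.+1.
  by move=> ik; case: eqP => [->|ne]; rewrite ?modnn // modn_small //; lia.
have f_lt (i j : 'I_k.+2) : i < j -> e (f i) (f j) = cycle_rel i j.
  case: i j => [i Hi] [j Hj] /= ij; rewrite /f /cycle_rel /= !cycle_mod //.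
  case: eqP => i0; case: eqP => j0; try lia.
  - by subst i; rewrite vadj; repeat case: ifP => ?; repeat case: eqP => ? //=; lia.
  - by rewrite gadj; repeat case: ifP => ?; repeat case: eqP => ? //=; lia.
move=> i j ne; case: (ltngtP i j) => ij; first exact: f_lt.
  by rewrite e_sym f_lt // /cycle_rel orbC.
by move/val_inj: ij ne => ->; rewrite eqxx.
Qed.

Lemma chordal_no_C4 a b x y : x != b -> y != a ->
  e a b -> e x y -> e x a -> e y b -> ~~ e x b -> ~~ e y a -> False.
Proof.
move=> xb ya eab exy exa eyb nxb nya.
have uniq_xyb : uniq [:: x; y; b].
  by rewrite /= !inE negb_or xb (edge_neq exy) (edge_neq eyb).
pose g i := nth b [:: x; y; b] i.
have gpath : induced_path g 2.
  split=> [i j ik jk /eqP|]; first by rewrite nth_uniq // => /eqP.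
  by case=> [|[|i]] [|[|[|j]]] //= _ _; apply: negbTE.
apply: (chordal_no_hole gpath (v := a)) => //.
- move=> i; rewrite /g; case: i => [|[|[|i]]] //= _; rewrite ?(edge_neq eab) // eq_sym.
  + exact: edge_neq exa.
  + exact: ya.
- by rewrite /g /= e_sym.
- by move=> i; rewrite /g; case: i => [|[|i]] //= _; rewrite e_sym.
Qed.

Lemma chordal_path_side (C : {set T}) a b g k :
  a \notin C -> b \notin C -> e a b -> induced_path g k -> (forall i, i <= k -> g i \in C) ->
  e (g k) a -> (forall i, 0 < i < k -> e (g i) a (+) e (g i) b) ->
  e (g 1) a -> forall i, 0 < i <= k -> e (g i) a.
Proof.
move=> aC bC eab [_ gadj] gC eka one e1a.
elim=> [|[|i] IHi] //= ik; have eia := IHi (ltnW ik).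
have [->//|ik'] := eqVneq i.+2 k; apply/negPn/negP => ni2a.
have ei2b : e (g i.+2) b.
  by move: (one i.+2); rewrite (negbTE ni2a) [i.+2 < k]ltn_neqAle ik' ik; apply.
have ni1b : ~~ e (g i.+1) b by move: (one i.+1 ik); rewrite eia.
apply: (chordal_no_C4 _ _ eab _ eia ei2b ni1b ni2a); last by rewrite gadj.
- by apply: contraNneq bC => <-; rewrite gC // ltnW.
- by apply: contraNneq aC => <-; rewrite gC.
Qed.

Lemma chordal_common_neighbor (C : {set T}) a b z1 z2 :
  a \notin C -> b \notin C -> e a b -> z1 \in C -> z2 \in C ->
  connect (induced_rel e C) z1 z2 -> e z1 a -> e z2 b ->
  exists2 q, q \in C & e q a && e q b.
Proof.
move=> aC bC eab z1C z2C z12 ez1a ez2b.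
have [g [k [gpath gC ega egb]]] := exists_linking_path z1C z2C z12 ez1a ez2b.
have [k0|k0] := posnP k; first by subst k; exists (g 0); rewrite ?gC ?ega ?egb.
have cat_path : induced_path (path_cat g k (fun=> b)) k.+1.
  apply: induced_path_snoc => // i ik.
  by apply: contraNneq bC => <-; rewrite gC.
exfalso; apply: (chordal_no_hole cat_path (v := a)); rewrite /path_cat.
- by rewrite ltnS.
- move=> i ik; case: ifP => ik'; last exact: edge_neq eab.
  by apply/eqP => agi; case/negP: aC; rewrite agi gC.
- by rewrite leq0n e_sym ega.
- by rewrite ltnn.
- move=> i /andP [i0 ik]; rewrite ltnS in ik.
  by rewrite ik e_sym ega // -lt0n.
Qed.

Lemma chordal_no_linking_cycle (C1 C2 : {set T}) a b g1 k1 g2 k2 :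
  ~~ e a b -> a != b -> a \notin C1 :|: C2 -> b \notin C1 :|: C2 ->
  (forall z y, z \in C1 -> y \in C2 -> (z != y) && ~~ e z y) ->
  linking_path C1 a b g1 k1 -> linking_path C2 b a g2 k2 -> False.
Proof.
rewrite !inE !negb_or => nab ab /andP [aC1 aC2] /andP [bC1 bC2] C12.
move=> [p1 g1C g1a g1b] [p2 g2C g2b g2a].
have p1b : induced_path (path_cat g1 k1 (fun=> b)) k1.+1.
  by apply: induced_path_snoc => // i ik; apply: contraNneq bC1 => <-; rewrite g1C.
have cyc : induced_path (path_cat (path_cat g1 k1 (fun=> b)) k1.+1 g2) (k1.+1 + k2).+1.
  apply: induced_path_cat p1b p2 _ _ => i j ik jk; rewrite /path_cat; case: ifP => ik1.
  - by case/andP: (C12 _ _ (g1C i ik1) (g2C j jk)) => /eqP.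
  - by move=> bg2; case/negP: bC2; rewrite bg2 g2C.
  - by rewrite (negbTE (andP (C12 _ _ (g1C i ik1) (g2C j jk))).2) ltn_eqF // ltnS.
  - have -> : i = k1.+1 by apply/eqP; rewrite eqn_leq ik ltnNge ik1.
    by rewrite eqxx e_sym g2b.
apply: (chordal_no_hole cyc (v := a)).
- by rewrite ltnS addSn.
- move=> i ik; rewrite /path_cat; case: ifP => [_|ik1]; first case: ifP => ik1.
  + by apply: contraNneq aC1 => ->; rewrite g1C.
  + exact: ab.
  + by apply: contraNneq aC2 => ->; rewrite g2C // leq_subLR addSn.
- by rewrite path_cat0 e_sym g1a.
- by rewrite path_cat_last e_sym g2a.
move=> i /andP [i0 ik]; rewrite /path_cat; case: ifP => [_|ik1]; first case: ifP => ik1.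
- by rewrite e_sym g1a // -lt0n.
- exact: nab.
have k1i : k1.+2 <= i by rewrite ltnNge ik1.
have lt_k2 : i - k1.+2 < k2 by rewrite ltn_subLR // addSn.
by rewrite e_sym g2a ?ltn_eqF // ltnW.
Qed.

Lemma min_cutset_clique A X a b r : min_cutset A X -> a \in X -> b \in X -> a != b ->
  r \in A :\: X -> e a b.
Proof.
move=> minX aX bX ab rB; apply/negPn/negP => nab.
have [u uB ru] := min_cutset_split minX rB.
have [za1 za1C eza1] := min_cutset_full minX aX rB.
have [zb1 zb1C ezb1] := min_cutset_full minX bX rB.
have [za2 za2C eza2] := min_cutset_full minX aX uB.
have [zb2 zb2C ezb2] := min_cutset_full minX bX uB.
have [g1 [k1 link1]] := exists_linking_path za1C zb1C (connect_component za1C zb1C) eza1 ezb1.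
have [g2 [k2 link2]] := exists_linking_path zb2C za2C (connect_component zb2C za2C) ezb2 eza2.
have notC x : x \in X -> x \notin component (A :\: X) r :|: component (A :\: X) u.
  by move=> xX; rewrite inE negb_or !component_setD_notin.
apply: (chordal_no_linking_cycle nab ab (notC a aX) (notC b bX) _ link1 link2).
by move=> z y; apply: component_separated.
Qed.

Lemma min_cutset_common_neighbor A X a b s : min_cutset A X -> a \in X -> b \in X ->
  e a b -> s \in A :\: X -> exists2 q, q \in component (A :\: X) s & e q a && e q b.
Proof.
move=> minX aX bX eab sB; have [za zaC eza] := min_cutset_full minX aX sB.
have [zb zbC ezb] := min_cutset_full minX bX sB.
apply: (chordal_common_neighbor _ _ eab zaC zbC (connect_component zaC zbC) eza ezb).
  exact: component_setD_notin.
exact: component_setD_notin.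
Qed.

Section KiteFree.

Hypothesis e_kite_free : kite_free e.

Lemma kite_free_contra x0 x1 x2 x3 x4 :
  e x0 x1 -> e x0 x2 -> e x1 x2 -> e x1 x3 -> e x2 x3 -> e x0 x4 ->
  ~~ e x0 x3 -> ~~ e x1 x4 -> ~~ e x2 x4 -> ~~ e x3 x4 ->
  x0 != x3 -> x1 != x4 -> x2 != x4 -> x3 != x4 -> False.
Proof.
move=> e01 e02 e12 e13 e23 e04 n03 n14 n24 n34 x03 x14 x24 x34.
pose s := [:: x0; x1; x2; x3; x4].
have s_uniq : uniq s.
  by rewrite /= !inE !negb_or x03 x14 x24 x34 !(edge_neq e01, edge_neq e02, edge_neq e04, edge_neq e12, edge_neq e13, edge_neq e23).
apply: (e_kite_free (f := fun i => nth x0 s i)); split.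
  by move=> i j /eqP; rewrite nth_uniq // => /eqP /val_inj.
have lt_kite (i j : 'I_5) : i < j -> e (nth x0 s i) (nth x0 s j) = kite_rel i j.
  case: i j => [[|[|[|[|[|i]]]]] Hi] [[|[|[|[|[|j]]]]] Hj] //= _;
  by apply/esym; rewrite /kite_rel /kite_edge /=; apply/esym/negbTE.
move=> i j; case: (ltngtP i j) => [ij _|ji _|/val_inj ->]; last by rewrite eqxx.
  exact: lt_kite.
by rewrite e_sym lt_kite // /kite_rel orbC.
Qed.

Lemma kite_free_no_ladder (C : {set T}) a b g k :
  a \notin C -> b \notin C -> e a b -> induced_path g k -> 2 <= k ->
  (forall i, i <= k -> g i \in C) -> ~~ e (g 0) a -> ~~ e (g 0) b ->
  e (g k) a -> e (g k) b -> (forall i, 0 < i < k -> e (g i) a (+) e (g i) b) -> False.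
Proof.
(* Every inner vertex sees the same end of ab as g 1, so g 1, a, g 2, the next vertex
   (g 3, or b when k = 2) and g 0 induce a kite. *)
move=> aC bC eab gpath k2 gC n0a n0b eka ekb one.
wlog e1a : a b aC bC eab n0a n0b eka ekb one / e (g 1) a.
  move=> wl; have [|e1b] := boolP (e (g 1) a); first by move=> e1a; apply: (wl a b).
  apply: (wl b a) => //; first by rewrite e_sym.
    by move=> i /one; rewrite addbC.
  by have := one 1; rewrite (negbTE e1b) k2; apply.
have [ginj gadj] := gpath.
have g_neq i j : i <= k -> j <= k -> i != j -> g i != g j.
  by move=> ik jk; apply: contra_neq; apply: ginj.
have sideA := chordal_path_side aC bC eab gpath gC eka one e1a.
have e2a : e (g 2) a := sideA 2 k2.
have [x3 [e3a e23 n13 n03 x31]] : exists x3,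
    [/\ e a x3, e (g 2) x3, ~~ e (g 1) x3, ~~ e (g 0) x3 & g 1 != x3].
  have [k3|k_le2] := ltnP 2 k.
    exists (g 3); rewrite e_sym (sideA 3 k3) !gadj //; split=> //.
    by rewrite g_neq // ltnW.
  have k2' : k = 2 by apply/eqP; rewrite eqn_leq k_le2 k2.
  exists b; split=> //; first by rewrite -k2'.
  - by move: (one 1 k2); rewrite e1a.
  - by apply: contraNneq bC => <-; rewrite gC // ltnW.
apply: (kite_free_contra (x0 := g 1) (x1 := a) (x2 := g 2) (x3 := x3) (x4 := g 0)) => //.
- by rewrite gadj.
- by rewrite e_sym.
- by rewrite e_sym gadj // ltnW.
- by rewrite e_sym.
- by rewrite e_sym gadj.
- by rewrite e_sym.
- by apply: contraNneq aC => ->; rewrite gC.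
- by rewrite g_neq.
- by apply: contraNneq n0a => <-; rewrite e_sym.
Qed.

Lemma min_cutset_pair_dominates A X a b r : min_cutset A X -> a \in X -> b \in X ->
  a != b -> r \in A :\: X -> e r a || e r b.
Proof.
(* A shortest path from r to a common neighbour of a and b in the component of r either
   is a single edge, which forms a kite with a common neighbour p taken in another
   component, or is excluded by kite_free_no_ladder. *)
move=> minX aX bX ab rB; apply/negPn/negP; rewrite negb_or => /andP [nra nrb].
have eab := min_cutset_clique minX aX bX ab rB.
have [u uB ru] := min_cutset_split minX rB.
have aC s := component_setD_notin A s aX; have bC s := component_setD_notin A s bX.
have [p pCu /andP [epa epb]] := min_cutset_common_neighbor minX aX bX eab uB.
have [q qCr /andP [eqa eqb]] := min_cutset_common_neighbor minX aX bX eab rB.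
have rCr := component_id rB.
have rP : r \in [set z in component (A :\: X) r | ~~ e z a && ~~ e z b].
  by rewrite inE rCr nra nrb.
have qQ : q \in [set z in component (A :\: X) r | e z a && e z b] by rewrite inE qCr eqa eqb.
have [g [k [[+ + gC _] gpath notP notQ]]] :=
  shortest_induced_path rP qQ rCr (connect_component rCr qCr).
rewrite !inE => /and3P [_ n0a n0b] /and3P [_ eka ekb].
have [_ gadj] := gpath.
have sep i : i <= k -> (g i != p) && ~~ e (g i) p.
  by move=> ik; apply: component_separated ru (gC i ik) pCu.
have [k1|k2] := leqP k 1; last first.
  apply: (kite_free_no_ladder (aC r) (bC r) eab gpath k2 gC n0a n0b eka ekb) => i ik.
  have [i0 ilt] := andP ik.
  move: (gC i (ltnW ilt)) (notP i) (notQ i ilt); rewrite !inE i0 (ltnW ilt) => -> /(_ isT).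
  by case: (e (g i) a); case: (e (g i) b).
have {k1} k1 : k = 1.
  by apply/eqP; rewrite eqn_leq k1 lt0n; apply: contraNneq n0a => k0; rewrite -k0.
subst k; have [g1p ng1p] := andP (sep 1 isT); have [g0p ng0p] := andP (sep 0 isT).
apply: (kite_free_contra (x0 := g 1) (x1 := a) (x2 := b) (x3 := p) (x4 := g 0)) => //.
- by rewrite e_sym.
- by rewrite e_sym.
- by rewrite e_sym gadj.
- by rewrite e_sym.
- by rewrite e_sym.
- by rewrite e_sym.
- by apply: contraNneq (aC r) => ->; rewrite gC.
- by apply: contraNneq (bC r) => ->; rewrite gC.
- by rewrite eq_sym.
Qed.

Lemma min_cutset_setD_le1 A X Y : min_cutset A X -> min_cutset A Y -> #|X :\: Y| <= 1.
Proof.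
(* For a, b in X \ Y take c in Y \ X: a neighbour r of c in a component of A \ Y
   avoiding a and b lies outside X and sees neither a nor b. *)
move=> minX minY; rewrite leqNgt; apply/negP => /card_gt1P [a [b [aXY bXY ab]]].
move: aXY bXY; rewrite !inE => /andP [aY aX] /andP [bY bX].
have [c cY cX] : exists2 c, c \in Y & c \notin X.
  apply/subsetPn/negP => YX.
  have YpX : Y \proper X by rewrite properE YX; apply/subsetPn; exists a.
  by case/negP: (min_cutset_minimal minX YpX); case/andP: minY.
have YA := min_cutset_sub minY; have XA := min_cutset_sub minX.
have cB : c \in A :\: X by rewrite inE cX (subsetP YA).
have eab := min_cutset_clique minX aX bX ab cB.
have aB : a \in A :\: Y by rewrite inE aY (subsetP XA).
have bB : b \in A :\: Y by rewrite inE bY (subsetP XA).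
have [u uB au] := min_cutset_split minY aB.
have [r rCu erc] := min_cutset_full minY cY uB.
have aCa := component_id aB; have bCa := component_closed aCa bB eab.
have [ar nar] := andP (component_separated au aCa rCu).
have [_ nbr] := andP (component_separated au bCa rCu).
have rX : r \notin X.
  by apply: contraNN nar => rX; apply: min_cutset_clique minX aX rX ar cB.
have rA : r \in A by move: (subsetP (component_sub _ _) _ rCu); rewrite inE => /andP [].
have rB : r \in A :\: X by rewrite inE rX rA.
move: (min_cutset_pair_dominates minX aX bX ab rB).
by rewrite ![e r _]e_sym (negbTE nar) (negbTE nbr).
Qed.

End KiteFree.

End Chordal.

End Graph.

Lemma sum_card_memberships (T : finType) (M : {set {set T}}) (S : {set T}) :
  \sum_(x in S) #|[set X in M | x \in X]| = \sum_(X in M) #|X :&: S|.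
Proof.
transitivity (\sum_(x in S) \sum_(X in M) (x \in X : nat)).
  apply: eq_bigr => x _; rewrite -sum1_card big_mkcond [RHS]big_mkcond /=.
  by apply: eq_bigr => X _; rewrite inE; case: (X \in M); case: (x \in X).
rewrite exchange_big; apply: eq_bigr => X _.
rewrite -sum1_card big_mkcond [RHS]big_mkcond /=.
by apply: eq_bigr => x _; rewrite inE; case: (x \in X); case: (x \in S).
Qed.

Lemma sum_cardI_ge_card (T : finType) (M : {set {set T}}) (S : {set T}) :
  (forall X Y, X \in M -> Y \in M -> #|X :\: Y| <= 1) ->
  (#|M| <= \sum_(X in M) #|X :&: S|) = [forall X in M, X :&: S != set0].
Proof.
move=> le1; apply/idP/forall_inP => [le_sum X XM|meetS]; last first.
  by rewrite -sum1_card; apply: leq_sum => X XM; rewrite card_gt0 meetS.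
apply: contraTneq le_sum => XS0; rewrite -ltnNge -sum1_card !(bigD1 X XM) /= XS0 cards0.
have dXS : [disjoint X & S] by rewrite -setI_eq0 XS0.
rewrite add0n add1n ltnS; apply: leq_sum => Y /andP [YM _].
apply: leq_trans (le1 Y X YM XM); apply/subset_leq_card/subsetP => z.
by rewrite !inE => /andP [zY zS]; rewrite zY (disjointFl dXS zS).
Qed.

Section RealSums.

Local Open Scope R_scope.

Lemma INR_sum (I : finType) (P : pred I) (f : I -> nat) :
  \big[Rplus/0]_(i | P i) INR (f i) = INR (\sum_(i | P i) f i)%N.
Proof. by rewrite (big_morph INR (id1 := 0) (op1 := Rplus) plus_INR (erefl : INR 0 = 0)). Qed.

End RealSums.

Theorem mainTheorem9 (T : finType) (e : rel T) :
  simple_graph e -> kite_free e -> chordal e ->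
  hereditarily_connected_domishold e.
Proof.
move=> [e_sym e_irr] e_kite e_chordal A; right.
pose M := [set X : {set T} | min_cutset e A X].
have le1 X Y : X \in M -> Y \in M -> #|X :\: Y| <= 1.
  by rewrite !inE; apply: min_cutset_setD_le1.
exists (fun x => INR #|[set X in M | x \in X]|), (INR #|M|).
split; [by move=> x _; apply: pos_INR | split; first exact: pos_INR].
move=> S SA; rewrite INR_sum sum_card_memberships.
have -> : Rle (INR #|M|) (INR (\sum_(X in M) #|X :&: S|)) <->
          [forall X in M, X :&: S != set0].
  by rewrite -(sum_cardI_ge_card S le1); split => [/INR_le/leP|/leP/le_INR].
split=> [/forall_inP meetS|cdsS].
  by apply: meets_min_cutsets_cds => // X minX; apply: meetS; rewrite inE.
by apply/forall_inP => X; rewrite inE; apply: cds_meets_min_cutset.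
Qed.
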